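(* Let $r>1$ and let $k,\ell,m$ be arbitrary positive integers. Let $x_0$ be chosen uniformly at random from the vertex set of the $(k,\ell,m)$-megastar and run the Moran process with fitness $r$ on it with initial mutant $x_0$. Then the process goes extinct with probability at least $k/(2r(m+k))$.
   Context: Moran process: given a directed graph $G$ and fitness $r$, one vertex $x_0$ is a mutant, the rest non-mutants. At each step a vertex $v$ is chosen with probability proportional to fitness (mutants $r$, non-mutants $1$), an out-neighbour $w$ of $v$ is chosen uniformly at random and the state of $v$ is copied to $w$. Extinction: eventually no vertex is a mutant. The $(k,\ell,m)$-megastar: disjoint union of reservoirs $R_1,\dots,R_\ell$ (size $m$), cliques $K_1,\dots,K_\ell$ (size $k$), feeders $a_1,\dots,a_\ell$, and centre $v^*$; edges from $v^*$ to all reservoir vertices, from each vertex of $R_i$ to $a_i$, from $a_i$ to each vertex of $K_i$, both directions between distinct vertices of each $K_i$, and from every clique vertex to $v^*$. *)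

From HB Require Import structures.
From mathcomp Require Import all_boot all_order all_algebra.
From mathcomp Require Import all_classical all_reals all_analysis.
Set Implicit Arguments. Unset Strict Implicit. Unset Printing Implicit Defensive.
Import Order.TTheory GRing.Theory Num.Theory.
Import numFieldNormedType.Exports.
Local Open Scope ring_scope.

(* A state is the set of mutant vertices. *)
Section Moran.
Variables (R : realType) (V : finType) (E : rel V) (r : R).

Definition fit (S : {set V}) (v : V) : R := if v \in S then r else 1.
Definition totfit (S : {set V}) : R := \sum_(v : V) fit S v.
Definition outdeg (v : V) : nat := #|[set w | E v w]|.

Definition moran_update (S : {set V}) (v w : V) : {set V} :=
  if v \in S then w |: S else S :\ w.

Definition moran_step (S S' : {set V}) : R :=
  \sum_(v : V) \sum_(w : V | E v w)
     (fit S v / totfit S) * (outdeg v)%:R^-1 * (S' == moran_update S v w)%:R.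

Fixpoint moran_dist (x0 : V) (t : nat) : {set V} -> R :=
  match t with
  | 0 => fun S => (S == [set x0])%:R
  | t'.+1 => fun S' => \sum_(S : {set V}) moran_dist x0 t' S * moran_step S S'
  end.

(* extinction probability: probability of eventually reaching the (absorbing)
   empty mutant set = limit of P(no mutants at time t) as t -> oo *)
Definition extinction_prob (x0 : V) : R := limn (fun t => moran_dist x0 t (finset.set0 : {set V})).
End Moran.

(* vertices: reservoirs R_i (pairs (i,j), j < m), cliques K_i (pairs (i,j),
   j < k), feeders a_i, centre v*. *)
Definition megastar_vertex (k l m : nat) : finType :=
  ((('I_l * 'I_m) + ('I_l * 'I_k)) + ('I_l + unit))%type.

Definition megastar_edge (k l m : nat) : rel (megastar_vertex k l m) :=
  fun x y =>
  match x, y with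
  | inr (inr tt), inl (inl _) => true                          (* v* -> R_i *)
  | inl (inl (i, _)), inr (inl i') => i == i'                  (* R_i -> a_i *)
  | inr (inl i), inl (inr (i', _)) => i == i'                  (* a_i -> K_i *)
  | inl (inr (i, j)), inl (inr (i', j')) => (i == i') && (j != j') (* K_i clique *)
  | inl (inr _), inr (inr tt) => true                          (* K_i -> v* *)
  | _, _ => false
  end.

From HB Require Import structures.
From mathcomp Require Import all_boot all_order all_algebra.
From mathcomp Require Import all_classical all_reals all_analysis.
From mathcomp Require Import ring lra zify.
Set Implicit Arguments.
Unset Strict Implicit.
Unset Printing Implicit Defensive.

Import Order.TTheory GRing.Theory Num.Theory.
Import numFieldNormedType.Exports.
Local Open Scope ring_scope.

(* A single mutant at x dies at the next step with probability T(x)/W and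
   stays exactly as it is with probability at least 1 - (T(x) + r)/W, where
   W is the total fitness and T(x) = sum over in-neighbours v of 1/outdeg v is
   the temperature of x.  Summing the resulting geometric series shows that x
   goes extinct with probability at least T(x)/(T(x) + r).  In the megastar
   every feeder, clique vertex and the centre has temperature at least 1, hence
   extinction probability at least 1/(2r), and these vertices make up a fraction
   at least k/(m+k) of all vertices. *)

Lemma limn_ge_geometric (R : realType) (b : R^nat) (p q : R) :
  0 <= p -> 0 <= q < 1 -> 0 <= b 0%N ->
  (forall t, b t + p * q ^+ t <= b t.+1) -> has_ubound (range b) ->
  p / (1 - q) <= limn b.
Proof.
move=> p0 /andP[q0 q1] b0 bS ub.
set c := p / (1 - q).
have c_geo t : c * (1 - q ^+ t.+1) = c * (1 - q ^+ t) + p * q ^+ t.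
  by rewrite /c exprSr; field; rewrite subr_eq0 gt_eqF.
have b_ge t : c * (1 - q ^+ t) <= b t.
  elim: t => [|t IH]; first by rewrite expr0 subrr mulr0.
  by rewrite c_geo (le_trans _ (bS t)) // lerD2r.
have b_mono : nondecreasing_seq b.
  apply/nondecreasing_seqP => t; apply: le_trans (bS t).
  by rewrite lerDl mulr_ge0 // exprn_ge0.
have lim_c : ((fun t => c - c * q ^+ t) @ \oo --> c - c * 0)%classic.
  apply: cvgB; first exact: cvg_cst.
  by apply: cvgMl_tmp; apply: cvg_expr; rewrite ger0_norm.
rewrite mulr0 subr0 in lim_c.
apply: (ler_cvg_to lim_c (nondecreasing_is_cvgn b_mono ub)).
by apply: nearW => t; rewrite -[X in X - _]mulr1 -mulrBr.
Qed.

Section MoranProcess.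
Variables (R : realType) (V : finType) (E : rel V) (r : R).
Hypothesis r_gt0 : 0 < r.
Hypothesis outdeg_gt0 : forall v, (0 < outdeg E v)%N.

Lemma fit_gt0 (S : {set V}) v : 0 < fit r S v.
Proof. by rewrite /fit; case: ifP. Qed.

Lemma totfit_gt0 (S : {set V}) (x : V) : 0 < totfit r S.
Proof.
rewrite /totfit (bigD1 x) //= ltr_pwDl ?fit_gt0 //.
by apply: sumr_ge0 => v _; apply: ltW; apply: fit_gt0.
Qed.

Lemma moran_rate_ge0 (S : {set V}) v : 0 <= fit r S v / totfit r S / (outdeg E v)%:R.
Proof.
by rewrite !divr_ge0 ?ler0n // ltW ?fit_gt0 ?(totfit_gt0 S v).
Qed.

Lemma moran_step_ge0 (S S' : {set V}) : 0 <= moran_step E r S S'.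
Proof.
by apply: sumr_ge0 => v _; apply: sumr_ge0 => w _; rewrite mulr_ge0 ?moran_rate_ge0.
Qed.

Lemma sum_out_const v (c : R) : \sum_(w | E v w) c = (outdeg E v)%:R * c.
Proof.
have -> : \sum_(w | E v w) c = \sum_(w in [set w | E v w]) c.
  by apply: eq_bigl => w; rewrite inE.
by rewrite sumr_const mulr_natl.
Qed.

Lemma sum_inv_outdeg v : \sum_(w | E v w) (outdeg E v)%:R^-1 = 1 :> R.
Proof. by rewrite sum_out_const mulfV // pnatr_eq0 -lt0n outdeg_gt0. Qed.

Lemma sum_moran_rate (S : {set V}) (x : V) :
  \sum_v \sum_(w | E v w) (fit r S v / totfit r S / (outdeg E v)%:R) = 1.
Proof.
under eq_bigr => v _ do rewrite -mulr_sumr sum_inv_outdeg mulr1.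
by rewrite -mulr_suml mulfV // gt_eqF // (totfit_gt0 S x).
Qed.

Lemma sum_moran_step (S : {set V}) (x : V) : \sum_S' moran_step E r S S' = 1.
Proof.
rewrite /moran_step exchange_big /= -[RHS](sum_moran_rate S x).
apply: eq_bigr => v _; rewrite exchange_big /=; apply: eq_bigr => w _.
rewrite -mulr_sumr (bigD1 (moran_update S v w)) //= eqxx big1 ?addr0 ?mulr1 //.
by move=> S' /negPf ->.
Qed.

Lemma moran_step_set0 (x : V) : moran_step E r finset.set0 finset.set0 = 1.
Proof.
rewrite /moran_step -[RHS](sum_moran_rate finset.set0 x); apply: eq_bigr => v _.
by apply: eq_bigr => w _; rewrite /moran_update finset.in_set0 finset.set0D eqxx mulr1.
Qed.

Lemma moran_dist_ge0 x t (S : {set V}) : 0 <= moran_dist E r x t S.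
Proof.
elim: t S => [|t IH] S /=; first exact: ler0n.
by apply: sumr_ge0 => S0 _; rewrite mulr_ge0 ?moran_step_ge0.
Qed.

Lemma sum_moran_dist x t : \sum_S moran_dist E r x t S = 1.
Proof.
elim: t => [|t IH] /=.
  by rewrite (bigD1 [set x]) //= eqxx big1 ?addr0 // => S /negPf ->.
rewrite exchange_big /= -[RHS]IH; apply: eq_bigr => S _.
by rewrite -mulr_sumr (sum_moran_step S x) mulr1.
Qed.

Lemma moran_dist_le1 x t (S : {set V}) : moran_dist E r x t S <= 1.
Proof.
rewrite -(sum_moran_dist x t) (bigD1 S) //= lerDl.
by apply: sumr_ge0 => *; apply: moran_dist_ge0.
Qed.

(* Self-loops at x are excluded: a mutant copying itself onto itself survives. *)
Definition temperature (x : V) : R :=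
  \sum_(v | v != x) (E v x)%:R / (outdeg E v)%:R.

Lemma temperature_ge0 x : 0 <= temperature x.
Proof. by apply: sumr_ge0 => v _; rewrite divr_ge0 ?ler0n. Qed.

Lemma temperature_le x : temperature x <= \sum_(v | v != x) 1.
Proof.
apply: ler_sum => v _; rewrite ler_pdivrMr ?ltr0n ?outdeg_gt0 // mul1r ler_nat.
by case: (E v x) => //=; apply: outdeg_gt0.
Qed.

Lemma fit_set1_neq (x v : V) : v != x -> fit r [set x] v = 1.
Proof. by move=> vx; rewrite /fit finset.in_set1 (negPf vx). Qed.

Lemma totfit_set1 (x : V) : totfit r [set x] = r + \sum_(v | v != x) 1.
Proof.
rewrite /totfit (bigD1 x) //= /fit finset.in_set1 eqxx; congr (_ + _).
by apply: eq_bigr => v vx; rewrite finset.in_set1 (negPf vx).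
Qed.

Lemma set1_neq0 (x : V) : ([set x] == finset.set0) = false.
Proof. by apply/negbTE/finset.set0Pn; exists x; rewrite finset.in_set1. Qed.

Lemma moran_update_set1_neq (x v w : V) : v != x ->
  ([set x] == moran_update [set x] v w) = (w != x).
Proof.
move=> vx; rewrite /moran_update finset.in_set1 (negPf vx).
case: (eqVneq w x) => [->|wx]; first by rewrite finset.setDv set1_neq0.
apply/eqP/setP => y; rewrite !inE.
by case: (eqVneq y x) => [->|_]; rewrite ?andbT ?andbF // eq_sym wx.
Qed.

Lemma sum_out_neq (x v : V) :
  \sum_(w | E v w) ((w != x)%:R : R) = (outdeg E v)%:R - (E v x)%:R.
Proof.
rewrite -[(outdeg E v)%:R]mulr1 -sum_out_const.
have -> : (E v x)%:R = \sum_(w | E v w) ((w == x)%:R : R).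
  rewrite big_mkcond (bigD1 x) //= eqxx big1 ?addr0; first by case: (E v x).
  by move=> w /negPf ->; case: (E v w).
by rewrite -sumrB; apply: eq_bigr => w _; case: (w == x); rewrite ?subr0 ?subrr.
Qed.

Lemma moran_step_set1_set0 x :
  temperature x / totfit r [set x] <= moran_step E r [set x] finset.set0.
Proof.
rewrite /moran_step (bigD1 x) //= ler_wpDl //.
  by apply: sumr_ge0 => w _; rewrite mulr_ge0 ?moran_rate_ge0.
rewrite /temperature mulr_suml; apply: ler_sum => v vx.
case: (boolP (E v x)) => [Evx|_]; last first.
  by rewrite !mul0r; apply: sumr_ge0 => w _; rewrite mulr_ge0 ?moran_rate_ge0.
rewrite (bigD1 x) //= /moran_update finset.in_set1 (negPf vx) finset.setDv eqxx.
rewrite {1}(fit_set1_neq vx) mulr1 mulrAC lerDl.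
by apply: sumr_ge0 => w _; rewrite mulr_ge0 ?moran_rate_ge0.
Qed.

Lemma moran_step_set1_set1 x :
  1 - (temperature x + r) / totfit r [set x] <= moran_step E r [set x] [set x].
Proof.
have W0 : totfit r [set x] != 0 by rewrite gt_eqF // (totfit_gt0 _ x).
have -> : 1 - (temperature x + r) / totfit r [set x] =
    (\sum_(v | v != x) 1 - temperature x) / totfit r [set x].
  by apply: (mulIf W0); rewrite mulrBl !mulfVK // mul1r totfit_set1; ring.
rewrite /moran_step [X in _ <= X](bigD1 x) //= ler_wpDl //.
  by apply: sumr_ge0 => w _; rewrite mulr_ge0 ?moran_rate_ge0.
rewrite le_eqVlt; apply/predU1l.
rewrite /temperature -sumrB mulr_suml; apply: eq_bigr => v vx.
under eq_bigr => w _ do rewrite moran_update_set1_neq // fit_set1_neq //.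
have dv0 : (outdeg E v)%:R != 0 :> R by rewrite pnatr_eq0 -lt0n outdeg_gt0.
by rewrite -mulr_sumr sum_out_neq; field; rewrite dv0 W0.
Qed.

Lemma extinction_prob_ge_temperature x :
  temperature x / (temperature x + r) <= extinction_prob E r x.
Proof.
set T := temperature x; set W := totfit r [set x].
have W_gt0 : 0 < W := totfit_gt0 _ x.
have T_ge0 : 0 <= T := temperature_ge0 x.
have Tr_gt0 : 0 < T + r by rewrite ltr_wpDl.
set q := 1 - (T + r) / W.
have q_ge0 : 0 <= q.
  rewrite subr_ge0 ler_pdivrMr // mul1r /W totfit_set1 addrC lerD2l.
  exact: temperature_le.
have q_lt1 : q < 1 by rewrite ltrBlDr ltrDl divr_gt0.
have stay t : q ^+ t <= moran_dist E r x t [set x].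
  elim: t => [|t IH]; first by rewrite expr0 /= eqxx.
  rewrite /= (bigD1 [set x]) //= exprSr; apply: ler_wpDr.
    by apply: sumr_ge0 => S _; rewrite mulr_ge0 ?moran_dist_ge0 ?moran_step_ge0.
  by rewrite ler_pM ?exprn_ge0 ?moran_step_set1_set1.
have die t : moran_dist E r x t finset.set0 + T / W * q ^+ t <=
             moran_dist E r x t.+1 finset.set0.
  rewrite /= (bigD1 finset.set0) //= (bigD1 [set x]) /=; last by rewrite set1_neq0.
  rewrite (moran_step_set0 x) mulr1 lerD2l; apply: ler_wpDr.
    by apply: sumr_ge0 => S _; rewrite mulr_ge0 ?moran_dist_ge0 ?moran_step_ge0.
  rewrite mulrC; apply: ler_pM.
  - exact: exprn_ge0.
  - by rewrite divr_ge0 // ltW.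
  - exact: stay.
  - exact: moran_step_set1_set0.
have -> : T / (T + r) = T / W / (1 - q).
  by rewrite /q; field; rewrite opprB addrC subrK !gt_eqF.
apply: limn_ge_geometric => //.
- by rewrite divr_ge0 // ltW.
- by rewrite q_ge0 q_lt1.
- by exists 1 => _ [t _ <-]; apply: moran_dist_le1.
Qed.

Lemma extinction_prob_ge0 x : 0 <= extinction_prob E r x.
Proof.
apply: le_trans (extinction_prob_ge_temperature x).
by rewrite divr_ge0 ?addr_ge0 ?temperature_ge0 ?ltW.
Qed.

Lemma temperature_ge1 (A : {set V}) x :
  (0 < #|A|)%N -> x \notin A ->
  {in A, forall v, E v x /\ (outdeg E v <= #|A|)%N} -> 1 <= temperature x.
Proof.
move=> A_gt0 xA inA.
pose e v : R := (E v x)%:R / (outdeg E v)%:R.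
have -> : 1 = \sum_(v in A) #|A|%:R^-1 :> R.
  by rewrite sumr_const -[_ *+ _]mulr_natr mulVf // pnatr_eq0 -lt0n.
apply: (@le_trans _ _ (\sum_(v in A) e v)).
  apply: ler_sum => v vA; have [Evx dv] := inA v vA.
  by rewrite /e Evx mul1r lef_pV2 ?posrE ?ltr0n ?outdeg_gt0 ?ler_nat.
rewrite /temperature [X in _ <= X]big_mkcond [X in X <= _]big_mkcond.
apply: ler_sum => v _; case: ifP => [vA|_]; last by case: ifP.
by rewrite ifT //; apply: contraNneq xA => <-.
Qed.

Lemma outdeg_le_image n v (g : 'I_n -> V) :
  (forall w, E v w -> exists j, w = g j) -> (outdeg E v <= n)%N.
Proof.
move=> Eg; apply: (@leq_trans #|[set g j | j : 'I_n]|).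
  apply: subset_leq_card; apply/fintype.subsetP => w.
  by rewrite inE => /Eg[j ->]; rewrite imset_f.
by rewrite (leq_trans (leq_imset_card _ _)) ?card_ord.
Qed.

End MoranProcess.

Lemma inv2r_le_div_addr (R : realFieldType) (r d : R) :
  1 <= r -> 1 <= d -> (2 * r)^-1 <= d / (d + r).
Proof.
move=> r1 d1; rewrite -subr_ge0.
have -> : d / (d + r) - (2 * r)^-1 = (d * (2 * r - 1) - r) / (2 * r * (d + r)).
  by field; rewrite !gt_eqF //; lra.
by rewrite divr_ge0 //; nra.
Qed.

Lemma card_image_ord (T : finType) n (g : 'I_n -> T) :
  injective g -> #|[set g j | j : 'I_n]| = n.
Proof. by move=> g_inj; rewrite card_imset // card_ord. Qed.

Section Megastar.
Variables k l m : nat.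
Hypotheses (k_gt0 : (0 < k)%N) (l_gt0 : (0 < l)%N) (m_gt0 : (0 < m)%N).
Notation V := (megastar_vertex k l m).
Notation E := (@megastar_edge k l m).

Definition reservoir i j : V := inl (inl (i, j)).
Definition clique i j : V := inl (inr (i, j)).
Definition feeder i : V := inr (inl i).
Definition centre : V := inr (inr tt).

Definition is_reservoir (x : V) : bool := if x is inl (inl _) then true else false.

Lemma megastar_outdeg_gt0 v : (0 < outdeg E v)%N.
Proof.
apply/card_gt0P; case: v => [[[i j]|[i j]]|[i|[]]].
- by exists (feeder i); rewrite inE /= eqxx.
- by exists centre; rewrite inE.
- by exists (clique i (Ordinal k_gt0)); rewrite inE /= eqxx.
- by exists (reservoir (Ordinal l_gt0) (Ordinal m_gt0)); rewrite inE.
Qed.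

Lemma outdeg_reservoir i j : (outdeg E (reservoir i j) <= 1)%N.
Proof.
apply: (outdeg_le_image (g := fun=> feeder i)).
by case=> [[[? ?]|[? ?]]|[?|[]]] //= /eqP <-; exists ord0.
Qed.

Lemma outdeg_clique i j : (outdeg E (clique i j) <= k)%N.
Proof.
apply: (outdeg_le_image (g := fun j' => if j' == j then centre else clique i j')).
case=> [[[? ?]|[i' j']]|[?|[]]] //=; last by exists j; rewrite eqxx.
by case/andP=> /eqP <- jj'; exists j'; rewrite eq_sym (negPf jj').
Qed.

Lemma outdeg_feeder i : (outdeg E (feeder i) <= k)%N.
Proof.
apply: (outdeg_le_image (g := clique i)).
by case=> [[[? ?]|[? j']]|[?|[]]] //= /eqP <-; exists j'.
Qed.

Section Temperatures.
Variable R : realType.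

Lemma temperature_clique i j : 1 <= temperature R E (clique i j).
Proof.
pose g j' := if j' == j then feeder i else clique i j'.
have g_inj : injective g.
  by move=> a b; rewrite /g; do 2 case: eqP => // ?; subst => // -[].
apply: (temperature_ge1 R megastar_outdeg_gt0 (A := [set g j' | j' : 'I_k]));
  rewrite ?(card_image_ord g_inj) //.
  apply/imsetP => -[j' _]; rewrite /g; case: eqP => // /eqP jj' [/eqP].
  by rewrite eq_sym (negPf jj').
move=> _ /imsetP[j' _ ->]; rewrite /g; case: eqP => [_|/eqP jj'] /=.
  by rewrite eqxx outdeg_feeder.
by rewrite eqxx jj' outdeg_clique.
Qed.

Lemma temperature_feeder i : 1 <= temperature R E (feeder i).
Proof.
apply: (temperature_ge1 R megastar_outdeg_gt0 (A := [set reservoir i (Ordinal m_gt0)]));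
  rewrite ?cards1 ?finset.in_set1 //.
by move=> _ /set1P ->; rewrite /= eqxx outdeg_reservoir.
Qed.

Lemma temperature_centre : 1 <= temperature R E centre.
Proof.
have c_inj : injective (clique (Ordinal l_gt0)) by move=> a b [].
apply: (temperature_ge1 R megastar_outdeg_gt0
          (A := [set clique (Ordinal l_gt0) j | j : 'I_k]));
  rewrite ?(card_image_ord c_inj) //.
  by apply/imsetP => -[].
by move=> _ /imsetP[j _ ->]; rewrite outdeg_clique.
Qed.

End Temperatures.

Lemma megastar_extinction_prob_ge (R : realType) (r : R) x :
  1 < r -> ~~ is_reservoir x -> (2 * r)^-1 <= extinction_prob E r x.
Proof.
move=> r_gt1 x_nres; have r_gt0 : 0 < r by apply: lt_trans r_gt1.
have T_ge1 : 1 <= temperature R E x.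
  case: x x_nres => [[[i j]|[i j]]|[i|[]]] // _.
  - exact: temperature_clique.
  - exact: temperature_feeder.
  - exact: temperature_centre.
apply: le_trans (extinction_prob_ge_temperature r_gt0 megastar_outdeg_gt0 x).
by apply: inv2r_le_div_addr; rewrite // ltW.
Qed.

Lemma card_megastar : #|V| = (l * m + (l * k + l + 1))%N.
Proof. by rewrite !card_sum !card_prod !card_ord card_unit !addnA. Qed.

Lemma sum_non_reservoir (R : nmodType) (c : R) :
  \sum_(x : V) (if is_reservoir x then 0 else c) = c *+ (l * k + l + 1).
Proof.
rewrite !big_sumType /= big1_eq add0r !sumr_const !card_prod !card_ord card_unit.
by rewrite -!mulrnDr addnA.
Qed.

Lemma megastar_non_reservoir_ratio :
  (k * #|V| <= (l * k + l + 1) * (m + k))%N.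
Proof. by rewrite card_megastar; nia. Qed.

End Megastar.

Theorem lemma7p1 (R : realType) (r : R) (k l m : nat) :
  1 < r -> (0 < k)%N -> (0 < l)%N -> (0 < m)%N ->
  k%:R / (2 * r * (m + k)%:R) <=
  #|megastar_vertex k l m|%:R^-1 *
    \sum_(x0 : megastar_vertex k l m)
       extinction_prob (@megastar_edge k l m) r x0.
Proof.
move=> r_gt1 k_gt0 l_gt0 m_gt0; have r_gt0 : 0 < r by apply: lt_trans r_gt1.
set N := #|megastar_vertex k l m|; set n := (l * k + l + 1)%N.
have r2_gt0 : 0 < (2 * r)^-1 by rewrite invr_gt0 mulr_gt0.
have N_gt0 : 0 < N%:R :> R by rewrite ltr0n /N card_megastar addn1 addnS.
have Ninv_ge0 : 0 <= N%:R^-1 :> R by rewrite invr_ge0 ltW.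
have mk_gt0 : 0 < (m + k)%:R :> R by rewrite ltr0n addn_gt0 k_gt0 orbT.
have sum_ge : (2 * r)^-1 *+ n <= \sum_x extinction_prob (@megastar_edge k l m) r x.
  rewrite -(sum_non_reservoir k l m); apply: ler_sum => x _.
  case: ifP => [_|/negbT x_nres].
    exact: extinction_prob_ge0 r_gt0 (megastar_outdeg_gt0 _ _ _) x.
  exact: megastar_extinction_prob_ge.
apply: (le_trans _ (ler_wpM2l Ninv_ge0 sum_ge)).
have -> : k%:R / (2 * r * (m + k)%:R) = (2 * r)^-1 * (k%:R / (m + k)%:R).
  by field; rewrite -natrD !gt_eqF.
rewrite -[_ *+ n]mulr_natr [in leRHS]mulrCA ler_pM2l // [N%:R^-1 * _]mulrC.
rewrite ler_pdivrMr // mulrAC ler_pdivlMr // -!natrM ler_nat.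
exact: megastar_non_reservoir_ratio.
Qed.
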